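(* Let $A \in \mathbb{C}^{m\times n}$, let $k$ be an integer with $1\le k\le\min\{m,n\}$, and let $\rho\in(0,1)$. Let $\Pi$ be the $n\times n$ column permutation matrix output by the CCEQR algorithm (described in the context) on input $(A,k,\rho)$. Then there exists a unitary $Q\in\mathbb{C}^{m\times m}$ such that $Q^*A\Pi$ has $\mathrm{GB}(k)$ form.
   Context: $\mathrm{GB}(k)$ form: a matrix $R\in\mathbb{C}^{m\times n}$ has $\mathrm{GB}(k)$ form ($0\le k\le\min\{m,n\}$) if its first $k$ columns are upper-triangular and $|R(i,i)| = \max_{i\le j\le n}\|R(i:m,j)\|_2$ for $1\le i\le k$. Householder reflection at step $i$ on $\mathbb{C}^p$: a unitary $I-\tau vv^*$, $\tau\ge0$ real, $v(1..i-1)=0$, $v(i)=1$, mapping a given $x$ to $[x(1),\dots,x(i-1),\mu',0,\dots,0]$ with $|\mu'|=\|x(i:p)\|_2$. Golub–Businger algorithm on $B\in\mathbb{C}^{p\times b}$ for $d\le\min\{p,b\}$ steps: $R\leftarrow B$; for $i=1..d$ choose $j_{\max}\in\arg\max_{j\ge i}\|R(i:p,j)\|_2$, swap columns $i,j_{\max}$ (recorded in a permutation $\widehat P$), let $H_i$ be the step-$i$ Householder reflection zeroing entries $(i+1):p$ of column $i$, set $R\leftarrow H_iR$; output $\widehat R = H_d\cdots H_1B\widehat P$. CCEQR algorithm on $(A,k,\rho)$. It maintains a permutation $\Pi$, a unitary $Q$, integers $s$ (''committed'' count) and $t$ (''tracked'' count) with $s+t\le n$, and a number $\mu$. Column positions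 $1..s$ are committed, $s+1..s+t$ tracked, $s+t+1..n$ untracked. Define $\gamma(j)=\|(Q^*A\Pi)((s+1):m,\,j)\|_2^2$ for $s<j\le s+t$ (the squared norm of the component of $A\Pi(:,j)$ orthogonal to the range of $A\Pi(:,1:s)$) and $\gamma(j)=\|A\Pi(:,j)\|_2^2$ for $j>s+t$. Initialize $Q=I_m$, $\Pi=I_n$, $s=0$, $t=n$, $\mu=0$. While $s<k$, perform a cycle: (Collect) Let $b=1+\lfloor\rho(t-1)\rfloor$. Let the candidates be $b$ indices of $\{s+1,\dots,s+t\}$ with the largest values of $\gamma$, and let $\delta$ be the largest $\gamma(j)$ over the non-candidate indices of $\{s+1,\dots,s+t\}$ ($\delta=0$ if $b=t$). In the first cycle only, then set $t\leftarrow b$ (non-candidates become untracked). Apply $d=\min\{m-s,b\}$ steps of the Golub–Businger algorithm to $B=(Q^*A\Pi)((s+1):m,\ \text{candidates})$, obtaining $\widehat P$, $H_1,\dots,H_d$, $\widehat R$. Update $\Pi$ by moving the candidate columns to positions $s+1,\dots,s+b$ in the order given by $\widehat P$, placing the other tracked columns in positions $s+b+1,\dots,s+t$ and leaving all other positions unchanged. (Commit) Let $c=\max\{i\in\{1,\dots,d\}: |\widehat R(i,i)|^2\ge\max(\delta,\mu)\}$. Set $Q\leftarrow Q\,\mathrm{diag}(I_s,\,H_1H_2\cdots H_c)$, $s\leftarrow s+c$, $t\leftarrow t-c$. If $s\ge k$, stop and output $\Pi$. (Expand) Let $M=\max_{s<j\le s+t}\gamma(j)$ (with $M=0$ if $t=0$).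 Let $U$ be the set of untracked positions $j>s+t$ with $\|A\Pi(:,j)\|_2^2\ge M$; if $U$ is empty and untracked positions exist, instead let $U$ be the untracked positions with $\|A\Pi(:,j)\|_2^2\ge 0.9$ times the largest squared norm among untracked columns. Permute these columns to positions $s+t+1,\dots,s+t+|U|$ (leaving committed and tracked positions unchanged), set $t\leftarrow t+|U|$, and set $\mu$ to the largest $\|A\Pi(:,j)\|_2^2$ over the remaining untracked positions ($\mu=0$ if none). *)

(* Complex scalars: an arbitrary numClosedFieldType C
   (e.g. complex numbers); conjugate transpose M^t* and unitarymx from
   mathcomp's spectral.v. *)
From HB Require Import structures.
From mathcomp Require Import all_boot all_order all_fingroup all_algebra.
From mathcomp Require Export spectral.

Set Implicit Arguments.
Unset Strict Implicit.
Unset Printing Implicit Defensive.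

Import Order.TTheory GRing.Theory Num.Theory.
Local Open Scope ring_scope.
Local Open Scope sesquilinear_scope.

Section CCEQR.
Variable C : numClosedFieldType.

Definition colsq p q (M : 'M[C]_(p, q)) (r : nat) (j : 'I_q) : C :=
  \sum_(i : 'I_p | (r <= i)%N) `|M i j| ^+ 2.

Definition colnorm p q (M : 'M[C]_(p, q)) (r : nat) (j : 'I_q) : C :=
  sqrtC (colsq M r j).

Definition is_max q (P : 'I_q -> Prop) (f : 'I_q -> C) (x : C) : Prop :=
  (exists2 j, P j & f j = x) /\ (forall j, P j -> f j <= x).

Definition is_max0 q (P : 'I_q -> Prop) (f : 'I_q -> C) (x : C) : Prop :=
  ((forall j, ~ P j) /\ x = 0) \/ is_max P f x.

(* GB(k) form, 0-based indices: first k columns upper triangular and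
   |R(i,i)| = max_{j >= i} ||R(i:m, j)||  for i < k. *)
Definition GB_form m n (k : nat) (R : 'M[C]_(m, n)) : Prop :=
  (forall (i : 'I_m) (j : 'I_n), (j < k)%N -> (j < i)%N -> R i j = 0) /\
  (forall (i : 'I_m) (i' : 'I_n), (i < k)%N -> val i = val i' ->
      is_max (fun j : 'I_n => (i <= j)%N) (colnorm R i) `|R i i'|).

Definition householder m (p : nat) (x : 'cV[C]_m) (H : 'M[C]_m) : Prop :=
  exists (tau : C) (v : 'cV[C]_m),
    [/\ tau \is Num.real /\ 0 <= tau,
        (forall j : 'I_m, (j < p)%N -> v j 0 = 0) /\
        (forall j : 'I_m, val j = p -> v j 0 = 1),
        H = 1%:M - tau *: (v *m (v ^t* )),
        H \is unitarymx &
        (exists mu' : C, `|mu'| = colnorm x p 0 /\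
          H *m x = \col_j (if (j < p)%N then x j 0
                           else if val j == p then mu' else 0))].

Fixpoint qpref m (Q : 'M[C]_m) (Hs : nat -> 'M[C]_m) (i : nat) : 'M[C]_m :=
  if i is i'.+1 then qpref Q Hs i' *m Hs i' else Q.

Variables (m n : nat) (A : 'M[C]_(m, n)) (k : nat) (rho : C).

Definition work (Q : 'M[C]_m) (P : 'S_n) : 'M[C]_(m, n) := (Q ^t* ) *m col_perm P A.

(* gamma(j): tracked positions s <= j < s+t use the part orthogonal to the
   committed columns; untracked positions use the full squared norm. *)
Definition gamma (Q : 'M[C]_m) (P : 'S_n) (s t : nat) (j : 'I_n) : C :=
  if (j < s + t)%N then colsq (work Q P) s j else colsq (col_perm P A) 0 j.

Definition collect_commit (P : 'S_n) (Q : 'M[C]_m) (s t : nat) (mu : C)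
    (first : bool) (P' : 'S_n) (Q' : 'M[C]_m) (s' t' : nat) : Prop :=
  let tracked := fun j : 'I_n => (s <= j)%N /\ (j < s + t)%N in
  let g := gamma Q P s t in
  exists (b : nat) (S : {set 'I_n}) (delta : C) (sigma : 'S_n)
         (Ps : nat -> 'S_n) (Hs : nat -> 'M[C]_m) (c : nat),
  let t1 := if first then b else t in
  let d := minn (m - s) b in
  let Rhat := work (qpref Q Hs d) (Ps d) in
  let cond := fun i : nat => forall (r : 'I_m) (q : 'I_n),
      val r = (s + i).-1 -> val q = (s + i).-1 ->
      delta <= `|Rhat r q| ^+ 2 /\ mu <= `|Rhat r q| ^+ 2 in
  [/\ (* b = 1 + floor(rho (t-1)) *)
      b%:R - 1 <= rho * (t%:R - 1) /\ rho * (t%:R - 1) < b%:R,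
      (forall j, j \in S -> tracked j) /\ #|S| = b /\
        (forall j j', j \in S -> tracked j' -> j' \notin S -> g j' <= g j),
      is_max0 (fun j => tracked j /\ j \notin S) g delta /\
      (forall j : 'I_n, ~ tracked j -> sigma j = j) /\
        (forall j : 'I_n, (s <= j)%N -> (j < s + b)%N -> sigma j \in S) /\
        Ps 0 = (sigma * P)%g,
      (forall i, (i < d)%N ->
         exists jp jmax : 'I_n,
           [/\ val jp = (s + i)%N /\ (s + i <= jmax)%N /\ (jmax < s + b)%N,
               (forall j : 'I_n, (s + i <= j)%N -> (j < s + b)%N ->
                  colsq (work (qpref Q Hs i) (Ps i)) (s + i) j
                  <= colsq (work (qpref Q Hs i) (Ps i)) (s + i) jmax),
               Ps i.+1 = (tperm jp jmax * Ps i)%g &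
               householder (s + i) (col jp (work (qpref Q Hs i) (Ps i.+1)))
                           (Hs i)]) &
      (* c = max { i in 1..d : |Rhat(i,i)|^2 >= max(delta, mu) } (0 if none) *)
      ((c <= d)%N /\ (c = 0%N \/ (1 <= c)%N /\ cond c) /\
        (forall i, (c < i)%N -> (i <= d)%N -> ~ cond i) /\
      [/\ P' = Ps d, Q' = qpref Q Hs c, s' = (s + c)%N & t' = (t1 - c)%N])].

Definition expand (P : 'S_n) (Q : 'M[C]_m) (s t : nat)
    (P' : 'S_n) (t' : nat) (mu' : C) : Prop :=
  let untr := fun j : 'I_n => (s + t <= j)%N in
  let nrm := fun j : 'I_n => colsq (col_perm P A) 0 j in
  exists (M Mu : C) (sigma : 'S_n),
  let U0 := [set j : 'I_n | (s + t <= j)%N && (M <= nrm j)] in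
  let U := if U0 != set0 then U0
           else [set j : 'I_n | (s + t <= j)%N && (9%:R / 10%:R * Mu <= nrm j)] in
  [/\ is_max0 (fun j : 'I_n => (s <= j)%N /\ (j < s + t)%N) (gamma Q P s t) M,
      is_max0 untr nrm Mu,
      (forall j : 'I_n, (j < s + t)%N -> sigma j = j) /\
        (forall j : 'I_n, (s + t <= j)%N -> (j < s + t + #|U|)%N -> sigma j \in U),
      P' = (sigma * P)%g /\
      t' = (t + #|U|)%N &
      is_max0 (fun j : 'I_n => (t' + s <= j)%N)
              (fun j => colsq (col_perm P' A) 0 j) mu'].

(* cceqr_out P Q s t mu first Pout : starting the while-loop from state
   (P, Q, s, t, mu, first), some run of CCEQR stops with output Pout. *)
Inductive cceqr_out : 'S_n -> 'M[C]_m -> nat -> nat -> C -> bool -> 'S_n -> Prop :=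
| cceqr_stop P Q s t mu f P' Q' s' t' :
    (s < k)%N -> collect_commit P Q s t mu f P' Q' s' t' -> (k <= s')%N ->
    cceqr_out P Q s t mu f P'
| cceqr_cycle P Q s t mu f P' Q' s' t' P'' t'' mu'' Pout :
    (s < k)%N -> collect_commit P Q s t mu f P' Q' s' t' -> (s' < k)%N ->
    expand P' Q' s' t' P'' t'' mu'' ->
    cceqr_out P'' Q' s' t'' mu'' false Pout ->
    cceqr_out P Q s t mu f Pout.

(* Pi (as a permutation s with A Pi = col_perm s A) is an output of CCEQR
   on (A, k, rho), from the initial state Q = I, Pi = I, s = 0, t = n, mu = 0. *)
Definition cceqr_output (P : 'S_n) : Prop :=
  cceqr_out 1%g 1%:M 0 n 0 true P.

End CCEQR.

From HB Require Import structures.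
From mathcomp Require Import all_boot all_order all_fingroup all_algebra spectral.
Import Order.TTheory GRing.Theory Num.Theory.
Local Open Scope ring_scope.
Local Open Scope sesquilinear_scope.
Set Implicit Arguments.
Unset Strict Implicit.
Unset Printing Implicit Defensive.

(* The loop invariant is: Q is unitary, the first s columns of Q^* A Pi are in
   GB(s) form, and every untracked column has squared norm at most mu.  In a
   Golub--Businger sweep each pivot has the largest remaining norm among the
   candidate columns, and the pivot norms are nonincreasing: a swap and a
   reflection at row s + i preserve remaining norms from row s + i, and a
   remaining norm only decreases as its starting row grows.  A column outside
   the candidate block keeps its remaining norm from row s, which is at most
   delta if it is tracked and at most mu if not.  The commit rule keeps only
   steps whose last pivot dominates both, so every committed pivot dominates
   all columns to its right and the GB form grows by c columns. *)

Lemma leq_down_ind (P : nat -> Prop) (c : nat) :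
  P c -> (forall i, (i < c)%N -> P i.+1 -> P i) -> forall i, (i <= c)%N -> P i.
Proof.
move=> Pc IH i /subKn <-; elim: (c - i)%N (leq_subr i c) => [|e IHe] he.
  by rewrite subn0.
have lt_c : (c - e.+1 < c)%N by rewrite ltn_subrL (leq_ltn_trans (leq0n e) he).
by apply: IH lt_c _; rewrite subnSK //; apply/IHe/ltnW.
Qed.

Lemma card_ord_interval n s b :
  (s + b <= n)%N -> #|[set j : 'I_n | (s <= j < s + b)%N]| = b.
Proof.
move=> le_n; have lt_n (x : 'I_b) : (s + x < n)%N.
  by apply: leq_trans le_n; rewrite ltn_add2l.
pose f x := Ordinal (lt_n x).
have f_inj : injective f by move=> x y /(congr1 val) /addnI /val_inj.
rewrite -[RHS](card_ord b) -cardsT -(card_imset _ f_inj).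
apply: eq_card => j; rewrite inE; apply/idP/imsetP => [/andP [le_j lt_j]|[x _ ->]].
  have lt_b : (j - s < b)%N by rewrite ltn_subLR.
  by exists (Ordinal lt_b); rewrite ?inE //; apply: val_inj; rewrite /= subnKC.
by rewrite /f /= leq_addr ltn_add2l ltn_ord.
Qed.

Lemma perm_on_fixed (T : finType) (S : {set T}) (u : {perm T}) :
  (forall x, x \notin S -> u x = x) -> perm_on S u.
Proof.
by move=> u_fix; apply/subsetP => x; rewrite inE; apply: contraR => /u_fix ->.
Qed.

Lemma perm_notin_image (T : finType) (u : {perm T}) (D S : {set T}) x :
  u @: D \subset S -> (#|S| <= #|D|)%N -> x \notin D -> u x \notin S.
Proof.
move=> sub_S le_S; have /eqP <- : u @: D == S.
  by rewrite eqEcard sub_S card_imset //; apply: perm_inj.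
by rewrite mem_imset //; apply: perm_inj.
Qed.

Section ColumnNorms.
Variable C : numClosedFieldType.
Implicit Types p q : nat.

Lemma adjmxM p q l (X : 'M[C]_(p, q)) (Y : 'M[C]_(q, l)) :
  (X *m Y)^t* = Y^t* *m X^t*.
Proof. by rewrite trmx_mul map_mxM. Qed.

Lemma colsq_ge0 p q (M : 'M[C]_(p, q)) r j : 0 <= colsq M r j.
Proof. by apply: sumr_ge0 => i _; rewrite exprn_ge0. Qed.

Lemma colsq0E p q (M : 'M[C]_(p, q)) j : colsq M 0 j = (M^t* *m M) j j.
Proof. by rewrite mxE; apply: eq_bigr => i _; rewrite !mxE normCKC. Qed.

Lemma colsq_leq p q (M : 'M[C]_(p, q)) r r' j :
  (r <= r')%N -> colsq M r' j <= colsq M r j.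
Proof.
move=> le_r; rewrite [leRHS](bigID (fun i : 'I_p => (r' <= i)%N)) /=.
rewrite (eq_bigl (fun i : 'I_p => (r' <= i)%N)) => [|i].
  by rewrite lerDl sumr_ge0 // => i _; rewrite exprn_ge0.
by apply/andb_idl/(leq_trans le_r).
Qed.

Lemma colsq_col_perm p q (M : 'M[C]_(p, q)) (u : 'S_q) r j :
  colsq (col_perm u M) r j = colsq M r (u j).
Proof. by apply: eq_bigr => i _; rewrite mxE. Qed.

Lemma colsq_unitarymx p q (U : 'M[C]_p) (M : 'M[C]_(p, q)) j :
  U \is unitarymx -> colsq (U *m M) 0 j = colsq M 0 j.
Proof.
move=> /unitarymxP/mulmx1C U_unitary.
by rewrite !colsq0E adjmxM -mulmxA (mulmxA _ U) U_unitary mul1mx.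
Qed.

Lemma colsq_eq_top p q (M N : 'M[C]_(p, q)) r j j' :
  colsq M 0 j = colsq N 0 j' -> (forall i : 'I_p, (i < r)%N -> M i j = N i j') ->
  colsq M r j = colsq N r j'.
Proof.
rewrite /colsq !(bigID (fun i : 'I_p => (r <= i)%N) predT) /= => eq_sum eq_top.
apply: (addIr (\sum_(i < p | ~~ (r <= i)%N) `|N i j'| ^+ 2)).
rewrite -{}eq_sum; congr (_ + _); apply: eq_bigr => i.
by rewrite -ltnNge => /eq_top ->.
Qed.

Lemma colsq_lower0 p q (M : 'M[C]_(p, q)) (r : 'I_p) j :
  (forall r' : 'I_p, (r < r')%N -> M r' j = 0) -> colsq M r j = `|M r j| ^+ 2.
Proof.
move=> M0; rewrite /colsq (bigD1 r) //= big1 ?addr0 // => r' /andP [le_r ne_r].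
by rewrite M0 ?normr0 ?expr0n // ltn_neqAle le_r andbT val_eqE eq_sym.
Qed.

End ColumnNorms.

Section Reflectors.
Variable C : numClosedFieldType.

(* The properties of a [householder] reflection that do not depend on the
   column it reduces. *)
Definition reflector m p (H : 'M[C]_m) : Prop :=
  exists (tau : C) (v : 'cV[C]_m),
    [/\ tau \is Num.real, forall j : 'I_m, (j < p)%N -> v j 0 = 0,
        H = 1%:M - tau *: (v *m v^t*) & H \is unitarymx].

Lemma householder_reflector m p (x : 'cV[C]_m) (H : 'M[C]_m) :
  householder p x H -> reflector p H.
Proof.
by case=> tau [v [[tau_real _] [v_top _] eqH H_unitary _]]; exists tau, v.
Qed.

Variables (m q p : nat) (H : 'M[C]_m).
Hypothesis H_refl : reflector p H.

Lemma reflector_unitary : H \is unitarymx.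
Proof. by case: H_refl => tau [v []]. Qed.

Lemma reflector_adj : H^t* = H.
Proof.
case: H_refl => tau [v [/conj_Creal tau_conj _ -> _]].
apply/matrixP=> i j; rewrite !mxE !big_ord1 !mxE /=.
rewrite !(rmorphB, rmorphM) /= tau_conj conjCK rmorph_nat eq_sym !mulrA.
by rewrite -!mulrA [_^* * _]mulrC.
Qed.

Lemma reflector_mulE : exists tau (v : 'cV[C]_m),
  (forall j : 'I_m, (j < p)%N -> v j 0 = 0) /\
  forall (M : 'M[C]_(m, q)) r j,
    (H *m M) r j = M r j - tau * v r 0 * \sum_l (v l 0)^* * M l j.
Proof.
case: H_refl => tau [v [_ v_top -> _]]; exists tau, v; split=> // M r j.
rewrite mulmxBl mul1mx -scalemxAl -mulmxA !mxE big_ord1 !mxE mulrA.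
by congr (_ - _ * _); apply: eq_bigr => l _; rewrite !mxE.
Qed.

Lemma reflector_mul_top (M : 'M[C]_(m, q)) (r : 'I_m) j :
  (r < p)%N -> (H *m M) r j = M r j.
Proof.
have [tau [v [v_top ->]]] := reflector_mulE.
by move=> lt_r; rewrite v_top // mulr0 mul0r subr0.
Qed.

Lemma reflector_mul_col_top (M : 'M[C]_(m, q)) (r : 'I_m) j :
  (forall l : 'I_m, (p <= l)%N -> M l j = 0) -> (H *m M) r j = M r j.
Proof.
have [tau [v [v_top ->]]] := reflector_mulE => M0.
rewrite big1 ?mulr0 ?subr0 // => l _.
by case: (leqP p l) => [/M0 ->|/v_top ->]; rewrite ?mulr0 ?conjC0 ?mul0r.
Qed.

Lemma colsq_reflector (M : 'M[C]_(m, q)) r j :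
  (r <= p)%N -> colsq (H *m M) r j = colsq M r j.
Proof.
move=> le_r; apply: colsq_eq_top; first exact/colsq_unitarymx/reflector_unitary.
by move=> i lt_i; apply/reflector_mul_top/(leq_trans lt_i).
Qed.

End Reflectors.

Section PartialGB.
Variables (C : numClosedFieldType) (m n : nat).
Implicit Types (W : 'M[C]_(m, n)) (s : nat).

Definition partial_GB s W : Prop :=
  (forall (r : 'I_m) (j : 'I_n), (j < s)%N -> (j < r)%N -> W r j = 0) /\
  (forall i j : 'I_n, (i < s)%N -> (i <= j)%N -> colsq W i j <= colsq W i i).

Lemma partial_GB_col_perm s W (u : 'S_n) :
  perm_on [set j : 'I_n | (s <= j)%N] u -> partial_GB s W ->
  partial_GB s (col_perm u W).
Proof.
move=> u_on [W0 W_max]; have u_fix (j : 'I_n) : (j < s)%N -> u j = j.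
  by move=> lt_j; apply: (out_perm u_on); rewrite inE -ltnNge.
split=> [r j lt_j lt_r|i j lt_i le_ij]; first by rewrite mxE u_fix ?W0.
rewrite !colsq_col_perm (u_fix i) //; apply: W_max => //.
case: (ltnP j s) => [/u_fix -> //|le_j].
have : u j \in [set j : 'I_n | (s <= j)%N] by rewrite (perm_closed _ u_on) inE.
by rewrite inE; apply: leq_trans (ltnW lt_i).
Qed.

Lemma partial_GB_reflector s p W (H : 'M[C]_m) :
  reflector p H -> (s <= p)%N -> partial_GB s W -> partial_GB s (H *m W).
Proof.
move=> H_refl le_sp [W0 W_max]; split=> [r j lt_j lt_r|i j lt_i le_ij].
  rewrite (reflector_mul_col_top H_refl) ?W0 // => l le_l.
  by apply: W0 (leq_trans lt_j (leq_trans le_sp le_l)).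
have le_ip : (i <= p)%N := leq_trans (ltnW lt_i) le_sp.
by rewrite !(colsq_reflector H_refl) //; apply: W_max.
Qed.

Lemma partial_GB_succ s W :
  partial_GB s W ->
  (forall (r : 'I_m) (j : 'I_n), val j = s -> (s < r)%N -> W r j = 0) ->
  (forall i j : 'I_n, val i = s -> (s <= j)%N -> colsq W s j <= colsq W s i) ->
  partial_GB s.+1 W.
Proof.
move=> [W0 W_max] Ws0 Ws_max; split=> [r j|i j].
  rewrite ltnS leq_eqVlt => /predU1P [eq_j|lt_j] lt_r; last exact: W0.
  by apply: Ws0; rewrite -?eq_j.
rewrite ltnS leq_eqVlt => /predU1P [eq_i|lt_i] le_ij; last exact: W_max.
by rewrite eq_i; apply: Ws_max; rewrite -?eq_i.
Qed.

Lemma partial_GB_GB_form k s W : (k <= s)%N -> partial_GB s W -> GB_form k W.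
Proof.
move=> le_ks [W0 W_max]; split=> [i j lt_j lt_i|i i' lt_i /= eq_i].
  exact: W0 (leq_trans lt_j le_ks) lt_i.
have lt_i's : (i' < s)%N by rewrite -eq_i (leq_trans lt_i le_ks).
have W_ii : colnorm W i i' = `|W i i'|.
  rewrite /colnorm colsq_lower0 ?sqrCK // => r lt_r.
  by apply: W0 => //; rewrite -eq_i.
split; first by exists i'; rewrite ?W_ii // eq_i.
move=> j le_ij; rewrite -W_ii ler_sqrtC ?nnegrE ?colsq_ge0 // eq_i.
by apply: W_max => //; rewrite -eq_i.
Qed.

End PartialGB.

Section GolubBusingerSteps.
Variables (C : numClosedFieldType) (m n : nat) (A : 'M[C]_(m, n)).

Lemma work_mulP Q (u P : 'S_n) : work A Q (u * P)%g = col_perm u (work A Q P).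
Proof.
rewrite /work col_permM; apply/matrixP=> i j; rewrite !mxE.
by apply: eq_bigr => l _; rewrite !mxE.
Qed.

Lemma work_mul_reflector Q P p (H : 'M[C]_m) :
  reflector p H -> work A (Q *m H) P = H *m work A Q P.
Proof. by move=> H_refl; rewrite /work adjmxM (reflector_adj H_refl) mulmxA. Qed.

Variables (Q : 'M[C]_m) (Hs : nat -> 'M[C]_m) (Ps : nat -> 'S_n) (s b d : nat).

Let W i := work A (qpref Q Hs i) (Ps i).

Definition pivot_step i (jp jmax : 'I_n) : Prop :=
  [/\ val jp = (s + i)%N /\ (s + i <= jmax)%N /\ (jmax < s + b)%N,
      forall j : 'I_n, (s + i <= j)%N -> (j < s + b)%N ->
        colsq (W i) (s + i) j <= colsq (W i) (s + i) jmax,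
      Ps i.+1 = (tperm jp jmax * Ps i)%g &
      householder (s + i) (col jp (work A (qpref Q Hs i) (Ps i.+1))) (Hs i)].

Section OneStep.
Variables (i : nat) (jp jmax : 'I_n).
Hypothesis piv : pivot_step i jp jmax.

Lemma pivot_reflector : reflector (s + i) (Hs i).
Proof. by case: piv => _ _ _ /householder_reflector. Qed.

Lemma W_succ : W i.+1 = Hs i *m col_perm (tperm jp jmax) (W i).
Proof.
case: piv => _ _ eq_Ps _.
by rewrite /W /= (work_mul_reflector _ _ pivot_reflector) eq_Ps work_mulP.
Qed.

Lemma pivot_perm_on :
  (i < b)%N -> perm_on [set j : 'I_n | (s + i <= j < s + b)%N] (tperm jp jmax).
Proof.
case: piv => [[eq_jp [le_jmax lt_jmax]]] _ _ _ lt_ib.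
apply: subset_trans (tperm_on jp jmax) _; apply/subsetP => j.
by rewrite !inE => /orP [] /eqP ->; rewrite ?eq_jp ?leqnn ?ltn_add2l ?le_jmax.
Qed.

Lemma pivot_perm_on_ge c :
  (c <= i)%N -> perm_on [set j : 'I_n | (s + c <= j)%N] (tperm jp jmax).
Proof.
case: piv => [[eq_jp [le_jmax _]]] _ _ _ le_ci.
have le_sc : (s + c <= s + i)%N by rewrite leq_add2l.
apply: subset_trans (tperm_on jp jmax) _; apply/subsetP => j.
by rewrite !inE => /orP [] /eqP ->; rewrite ?eq_jp ?(leq_trans le_sc).
Qed.

Lemma colsq_W_succ r j :
  (r <= s + i)%N -> colsq (W i.+1) r j = colsq (W i) r (tperm jp jmax j).
Proof.
by move=> le_r; rewrite W_succ (colsq_reflector pivot_reflector) ?colsq_col_perm.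
Qed.

Lemma W_succ_top (r : 'I_m) j :
  (r < s + i)%N -> W i.+1 r j = W i r (tperm jp jmax j).
Proof.
by move=> lt_r; rewrite W_succ (reflector_mul_top pivot_reflector) ?mxE.
Qed.

Lemma W_succ_pivot_lower (r : 'I_m) : (s + i < r)%N -> W i.+1 r jp = 0.
Proof.
case: piv => _ _ _ [tau [v [_ _ _ _ [mu' [_ Hx]]]]] lt_r.
have -> : W i.+1 r jp = (Hs i *m col jp (work A (qpref Q Hs i) (Ps i.+1))) r 0.
  rewrite /W /= (work_mul_reflector _ _ pivot_reflector) !mxE.
  by apply: eq_bigr => l _; rewrite !mxE.
by rewrite Hx mxE ltnNge (ltnW lt_r) gtn_eqF.
Qed.

End OneStep.

Hypothesis d_le_b : (d <= b)%N.
Hypothesis steps : forall i, (i < d)%N -> exists jp jmax, pivot_step i jp jmax.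

Lemma qpref_unitary c : Q \is unitarymx -> (c <= d)%N -> qpref Q Hs c \is unitarymx.
Proof.
move=> Q_unitary; elim: c => [//|c IH] lt_cd; have [jp [jmax piv]] := steps lt_cd.
exact/mul_unitarymx/(reflector_unitary (pivot_reflector piv))/IH/ltnW.
Qed.

Lemma tperm_pivot_out i jp jmax (j : 'I_n) :
  pivot_step i jp jmax -> (i < d)%N -> ~~ (s + i <= j < s + b)%N ->
  tperm jp jmax j = j.
Proof.
move=> piv lt_id out_j; apply: out_perm (pivot_perm_on piv _) _.
  exact: leq_trans lt_id d_le_b.
by rewrite inE.
Qed.

Lemma colsq_W_noncandidate i (j : 'I_n) :
  (i <= d)%N -> (s + b <= j)%N -> colsq (W i) s j = colsq (W 0) s j.
Proof.
elim: i => [//|i IH] lt_id le_j; have [jp [jmax piv]] := steps lt_id.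
rewrite (colsq_W_succ piv j (leq_addr i s)) (tperm_pivot_out piv lt_id).
  exact: IH (ltnW lt_id) le_j.
by rewrite ltnNge le_j andbF.
Qed.

Lemma W_frozen c l (r : 'I_m) (q : 'I_n) :
  (c <= l <= d)%N -> (r < s + c)%N -> (q < s + c)%N -> W l r q = W c r q.
Proof.
move=> /andP [le_cl le_ld] lt_r lt_q; elim: l le_cl le_ld => [|l IH].
  by rewrite leqn0 => /eqP ->.
rewrite leq_eqVlt ltnS => /predU1P [-> //|le_cl] lt_ld.
have [jp [jmax piv]] := steps lt_ld.
have le_sc : (s + c <= s + l)%N by rewrite leq_add2l.
rewrite (W_succ_top piv q (leq_trans lt_r le_sc)) (tperm_pivot_out piv lt_ld).
  exact: IH le_cl (ltnW lt_ld).
by rewrite leqNgt (leq_trans lt_q le_sc).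
Qed.

Lemma partial_GB_W_tail c l :
  (c <= l <= d)%N -> partial_GB (s + c) (work A (qpref Q Hs c) (Ps c)) ->
  partial_GB (s + c) (work A (qpref Q Hs c) (Ps l)).
Proof.
move=> /andP [le_cl le_ld] GB_c; elim: l le_cl le_ld => [|l IH].
  by rewrite leqn0 => /eqP <-.
rewrite leq_eqVlt ltnS => /predU1P [<- //|le_cl] lt_ld.
have [jp [jmax piv]] := steps lt_ld; case: (piv) => _ _ -> _.
rewrite work_mulP; apply: partial_GB_col_perm (IH le_cl (ltnW lt_ld)).
apply: (pivot_perm_on_ge piv le_cl).
Qed.

Lemma pivot_dominates i jp jmax :
  pivot_step i jp jmax -> (i < d)%N ->
  (forall j : 'I_n, (s + b <= j)%N -> exists2 j0 : 'I_n, (s + i <= j0 < s + b)%N &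
     colsq (W 0) s j <= colsq (W i) (s + i) j0) ->
  forall j : 'I_n, (s + i <= j)%N ->
    colsq (W i) (s + i) j <= colsq (W i) (s + i) jmax.
Proof.
case=> _ W_max _ _ lt_id big_pivot j le_j.
case: (ltnP j (s + b)) => [lt_j|le_bj]; first exact: W_max.
have [j0 /andP [le_j0 lt_j0] j0_ge] := big_pivot j le_bj.
apply: le_trans (W_max _ le_j0 lt_j0); apply: le_trans j0_ge.
rewrite -(colsq_W_noncandidate (ltnW lt_id) le_bj).
exact: colsq_leq (leq_addr i s).
Qed.

Lemma partial_GB_W c :
  (c <= d)%N -> partial_GB s (W 0) ->
  (forall i, (i < c)%N -> forall j : 'I_n, (s + b <= j)%N ->
     exists2 j0 : 'I_n, (s + i <= j0 < s + b)%N &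
       colsq (W 0) s j <= colsq (W i) (s + i) j0) ->
  partial_GB (s + c) (W c).
Proof.
move=> + GB_0; elim: c => [|c IH] le_cd big_pivot; first by rewrite addn0.
have [jp [jmax piv]] := steps le_cd.
have GB_c := IH (ltnW le_cd) (fun i lt_i => big_pivot i (ltnW lt_i)).
have dom := pivot_dominates piv le_cd (big_pivot c (ltnSn c)).
have tperm_on_c := pivot_perm_on_ge piv (leqnn c).
case: (piv) => [[eq_jp _]] _ _ _; rewrite addnS; apply: partial_GB_succ.
- rewrite (W_succ piv).
  apply: partial_GB_reflector (pivot_reflector piv) (leqnn _) _.
  exact: partial_GB_col_perm GB_c.
- move=> r j eq_j; have -> : j = jp by apply: val_inj; rewrite eq_j eq_jp.
  exact: W_succ_pivot_lower piv r.
- move=> i j eq_i le_j; have -> : i = jp by apply: val_inj; rewrite eq_i eq_jp.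
  rewrite !(colsq_W_succ piv) // tpermL; apply: dom.
  have : j \in [set j : 'I_n | (s + c <= j)%N] by rewrite inE.
  by rewrite -(perm_closed _ tperm_on_c) inE.
Qed.

Lemma candidate_lower_pred x i :
  (i < d)%N ->
  (exists2 j : 'I_n, (s + i.+1 <= j < s + b)%N &
     x <= colsq (W i.+1) (s + i.+1) j) ->
  exists2 j : 'I_n, (s + i <= j < s + b)%N & x <= colsq (W i) (s + i) j.
Proof.
move=> lt_id [j /andP [le_j lt_j] x_le]; have [jp [jmax piv]] := steps lt_id.
exists (tperm jp jmax j).
  have : j \in [set j : 'I_n | (s + i <= j < s + b)%N].
    by rewrite inE lt_j andbT (leq_trans _ le_j) // leq_add2l.
  by rewrite -(perm_closed _ (pivot_perm_on piv (leq_trans lt_id d_le_b))) inE.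
rewrite -(colsq_W_succ piv j (leqnn _)); apply: (le_trans x_le).
by apply: colsq_leq; rewrite leq_add2l.
Qed.

Lemma pivot_entry_colsq i jp jmax (r : 'I_m) :
  pivot_step i jp jmax -> (i < d)%N -> val r = (s + i)%N ->
  `|W d r jp| ^+ 2 = colsq (W i) (s + i) jmax.
Proof.
move=> piv lt_id eq_r; case: (piv) => [[eq_jp _]] _ _ _.
rewrite (@W_frozen i.+1) ?lt_id ?leqnn ?eq_r ?eq_jp ?addnS //.
rewrite -colsq_lower0 => [|r' lt_r']; last first.
  by apply: (W_succ_pivot_lower piv); rewrite -eq_r.
by rewrite eq_r (colsq_W_succ piv jp (leqnn _)) tpermL.
Qed.

Lemma pivot_lower_bound l (r : 'I_m) (q : 'I_n) :
  (l < d)%N -> val r = (s + l)%N -> val q = (s + l)%N ->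
  forall i, (i <= l)%N ->
  exists2 j : 'I_n, (s + i <= j < s + b)%N &
    `|W d r q| ^+ 2 <= colsq (W i) (s + i) j.
Proof.
move=> lt_ld eq_r eq_q; apply: leq_down_ind => [|i lt_il]; last first.
  exact/candidate_lower_pred/(ltn_trans lt_il).
have [jp [jmax piv]] := steps lt_ld.
case: (piv) => [[eq_jp [le_jmax lt_jmax]]] _ _ _.
have -> : q = jp by apply: val_inj; rewrite eq_q eq_jp.
by exists jmax; rewrite ?le_jmax ?(pivot_entry_colsq piv).
Qed.

Lemma committed_pivot_bound c x :
  (0 < c <= d)%N -> (d <= m - s)%N ->
  (forall (r : 'I_m) (q : 'I_n),
     val r = (s + c).-1 -> val q = (s + c).-1 -> x <= `|W d r q| ^+ 2) ->
  forall i, (i < c)%N ->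
  exists2 j : 'I_n, (s + i <= j < s + b)%N & x <= colsq (W i) (s + i) j.
Proof.
move=> /andP [c_gt0 le_cd] le_dm x_le i lt_ic.
have lt_c1d : (c.-1 < d)%N by rewrite prednK.
have lt_rm : (s + c.-1 < m)%N by rewrite -ltn_subRL (leq_trans lt_c1d).
have eq_c1 : (s + c).-1 = (s + c.-1)%N by rewrite -!subn1 addnBA.
have [jp [jmax [[eq_jp _] _ _ _]]] := steps lt_c1d.
have [|j0 cand_j0 j0_ge] :=
  pivot_lower_bound lt_c1d (r := Ordinal lt_rm) erefl eq_jp (i := i).
  by rewrite -ltnS prednK.
by exists j0 => //; apply: le_trans j0_ge; apply: x_le; rewrite eq_c1.
Qed.

End GolubBusingerSteps.

Section CCEQRLoop.
Variables (C : numClosedFieldType) (m n : nat) (A : 'M[C]_(m, n)).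

Definition loop_invariant Q (P : 'S_n) s t (mu : C) : Prop :=
  [/\ Q \is unitarymx, partial_GB s (work A Q P) &
      forall j : 'I_n, (s + t <= j)%N -> colsq (col_perm P A) 0 j <= mu].

Lemma collect_noncandidate_le Q P s t b mu delta (S : {set 'I_n}) (sigma : 'S_n)
    (j : 'I_n) :
  Q \is unitarymx ->
  (forall j : 'I_n, (s + t <= j)%N -> colsq (col_perm P A) 0 j <= mu) ->
  #|S| = b ->
  is_max0 (fun j => ((s <= j)%N /\ (j < s + t)%N) /\ j \notin S)
          (gamma A Q P s t) delta ->
  perm_on [set j : 'I_n | (s <= j < s + t)%N] sigma ->
  (forall j : 'I_n, (s <= j)%N -> (j < s + b)%N -> sigma j \in S) ->
  (s + b <= j)%N ->
  colsq (work A Q (sigma * P)) s j <= delta \/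
  colsq (work A Q (sigma * P)) s j <= mu.
Proof.
move=> Q_unitary untracked_le card_S delta_max sigma_on sigma_cand le_j.
rewrite work_mulP colsq_col_perm.
case: (boolP (sigma j \in [set j : 'I_n | (s <= j < s + t)%N])) => [|j_out].
  rewrite inE => /andP [le_sj lt_sj]; left.
  have sj_notin : sigma j \notin S.
    set D := [set j : 'I_n | (s <= j < s + b)%N].
    apply: (@perm_notin_image _ _ D).
    - apply/subsetP => _ /imsetP [x + ->]; rewrite inE => /andP [le_x lt_x].
      exact: sigma_cand.
    - by rewrite card_S card_ord_interval // (leq_trans le_j (ltnW (ltn_ord j))).
    by rewrite /D inE ltnNge le_j andbF.
  case: delta_max => [[none _]|[_ max_delta]]; first by case: (none (sigma j)).
  have := max_delta (sigma j) (conj (conj le_sj lt_sj) sj_notin).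
  by rewrite /gamma lt_sj.
right; have := j_out; rewrite (perm_closed _ sigma_on).
move=> /[dup] /(out_perm sigma_on) ->.
rewrite inE (leq_trans (leq_addr b s) le_j) /= -leqNgt => le_tj.
apply: le_trans (untracked_le _ le_tj).
have Qt_unitary : Q^t* \is unitarymx by rewrite trmxC_unitary.
by rewrite -(colsq_unitarymx _ j Qt_unitary) colsq_leq.
Qed.

Lemma commit_partial_GB rho Q P s t mu f P' Q' s' t' :
  loop_invariant Q P s t mu -> collect_commit A rho P Q s t mu f P' Q' s' t' ->
  Q' \is unitarymx /\ partial_GB s' (work A Q' P').
Proof.
case=> Q_unitary GB_s untracked_le [b [S [delta [sigma [Ps [Hs [c]]]]]]] /=.
case=> _ [_ [card_S _]] [delta_max [sigma_fix [sigma_cand Ps0]]] steps.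
case=> le_cd [c_cond [_ [-> -> -> _]]].
set d := minn (m - s) b in steps le_cd c_cond *.
have d_le_b : (d <= b)%N := geq_minr _ _.
have sigma_on : perm_on [set j : 'I_n | (s <= j < s + t)%N] sigma.
  by apply: perm_on_fixed => j; rewrite inE => /andP /sigma_fix.
have W0 : work A (qpref Q Hs 0) (Ps 0) = work A Q (sigma * P) by rewrite Ps0.
split; first exact: (qpref_unitary steps).
apply: (partial_GB_W_tail steps (c := c) (l := d)).
  by rewrite le_cd leqnn.
apply: (partial_GB_W d_le_b steps) => //.
  rewrite W0 work_mulP; apply: partial_GB_col_perm GB_s.
  apply: subset_trans sigma_on _; apply/subsetP => j.
  by rewrite !inE => /andP [].
move=> i lt_ic j le_j; rewrite W0.
case: c_cond => [c0|[c_gt0 Rhat_ge]]; first by rewrite c0 in lt_ic.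
have c_range : (0 < c <= d)%N by rewrite c_gt0 le_cd.
have [x le_jx x_le] : exists2 x, colsq (work A Q (sigma * P)) s j <= x &
    forall (r : 'I_m) (q : 'I_n), val r = (s + c).-1 -> val q = (s + c).-1 ->
      x <= `|work A (qpref Q Hs d) (Ps d) r q| ^+ 2.
  case: (collect_noncandidate_le Q_unitary untracked_le card_S delta_max sigma_on
    sigma_cand le_j) => le_jx; [exists delta|exists mu] => // r q eq_r eq_q.
    by case: (Rhat_ge r q eq_r eq_q).
  by case: (Rhat_ge r q eq_r eq_q).
have [j0 cand_j0 j0_ge] :=
  committed_pivot_bound d_le_b steps c_range (geq_minl _ _) x_le lt_ic.
by exists j0; rewrite // (le_trans le_jx).
Qed.

Lemma expand_loop_invariant Q P s t P' t' mu' :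
  Q \is unitarymx -> partial_GB s (work A Q P) -> expand A P Q s t P' t' mu' ->
  loop_invariant Q P' s t' mu'.
Proof.
move=> Q_unitary GB_s [M [Mu [sigma]]] /= [_ _ [sigma_fix _] [-> ->] mu'_max].
split=> // [|j le_j].
  rewrite work_mulP; apply: partial_GB_col_perm GB_s; apply: perm_on_fixed => j.
  by rewrite inE -ltnNge => lt_j; apply/sigma_fix/(leq_trans lt_j)/leq_addr.
case: mu'_max => [[none _]|[_ max_mu']]; first by case: (none j); rewrite addnC.
by apply: max_mu'; rewrite addnC.
Qed.

Lemma cceqr_out_partial_GB k rho P Q s t mu f Pout :
  cceqr_out A k rho P Q s t mu f Pout -> loop_invariant Q P s t mu ->
  exists Q' s',
    [/\ Q' \is unitarymx, (k <= s')%N & partial_GB s' (work A Q' Pout)].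
Proof.
elim=> {P Q s t mu f Pout} [P Q s t mu f P' Q' s' t' _ cycle le_ks inv
  |P Q s t mu f P' Q' s' t' P'' t'' mu'' Pout _ cycle _ exp _ IH inv].
  by have [Q'_unitary GB'] := commit_partial_GB inv cycle; exists Q', s'.
have [Q'_unitary GB'] := commit_partial_GB inv cycle.
exact/IH/(expand_loop_invariant Q'_unitary GB' exp).
Qed.

Lemma loop_invariant_init : loop_invariant 1%:M 1%g 0 n 0.
Proof.
split=> [|| j]; first by apply/unitarymxP; rewrite trmx1 map_mx1 mulmx1.
  by split=> // i j.
by rewrite add0n leqNgt ltn_ord.
Qed.

End CCEQRLoop.

Theorem theorem3p2 (C : numClosedFieldType) (m n : nat) (A : 'M[C]_(m, n))
    (k : nat) (rho : C) :
  (1 <= k)%N -> (k <= minn m n)%N -> 0 < rho -> rho < 1 ->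
  forall P : 'S_n, cceqr_output A k rho P ->
  exists Q : 'M[C]_m, Q \is unitarymx /\ GB_form k ((Q ^t* ) *m col_perm P A).
Proof.
move=> _ _ _ _ P out.
have [Q [s [Q_unitary le_ks GB_s]]] :=
  cceqr_out_partial_GB out (loop_invariant_init A).
by exists Q; split=> //; apply: partial_GB_GB_form le_ks GB_s.
Qed.
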